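(* Let $\mathcal{G}=(\mathcal{V},\mathcal{E},\mathbf{W})$ be a weighted undirected graph with symmetric nonnegative weights, and let $\mathcal{F}=\{\mathcal{C}_1,\dots,\mathcal{C}_{|\mathcal{F}|}\}$ be a partition of $\mathcal{V}$ into pairwise disjoint clusters. Let $x:\mathcal{V}\to\mathbb{R}$ be any graph signal observed on a sampling set $\mathcal{M}\subseteq\mathcal{V}$. Suppose $\|u\|_{\mathcal{E}\setminus\partial\mathcal{F}}\ge 2\|u\|_{\partial\mathcal{F}}$ for every $u:\mathcal{V}\to\mathbb{R}$ with $u[i]=0$ for all $i\in\mathcal{M}$. Then every solution $\hat{x}$ of $$\min_{\tilde{x}:\mathcal{V}\to\mathbb{R}}\|\tilde{x}\|_{\rm TV}\quad\text{subject to}\quad\tilde{x}[i]=x[i]\ \text{for all } i\in\mathcal{M}$$ satisfies $$\|x-\hat{x}\|_{\rm TV}\le 6\min_{a_1,\dots,a_{|\mathcal{F}|}\in\mathbb{R}}\Big\|x-\sum_{l=1}^{|\mathcal{F}|}a_l\mathcal{I}_{\mathcal{C}_l}\Big\|_{\rm TV}.$$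
   Context: $\mathcal{I}_{\mathcal{C}}[i]=1$ if $i\in\mathcal{C}$ and $0$ otherwise. For a set of edges $\mathcal{S}\subseteq\mathcal{E}$ and a signal $x:\mathcal{V}\to\mathbb{R}$, $\|x\|_{\mathcal{S}}=\sum_{\{i,j\}\in\mathcal{S}}W_{i,j}|x[i]-x[j]|$, and $\|x\|_{\rm TV}=\|x\|_{\mathcal{E}}$. The boundary of the partition is $\partial\mathcal{F}=\{\{i,j\}\in\mathcal{E}: i\in\mathcal{C}_l, j\in\mathcal{C}_{l'}, l\neq l'\}$. *)

From mathcomp Require Import all_boot all_order all_algebra.
Set Implicit Arguments. Unset Strict Implicit. Unset Printing Implicit Defensive.
Import Order.TTheory GRing.Theory Num.Theory.
Local Open Scope ring_scope.

(* An (unordered) edge set S ⊆ E is given by a symmetric boolean predicate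
   S on ordered pairs; the edge {i,j} is in S iff e i j && S i j.
   ||x||_S = sum_{{i,j} in S} W i j |x i - x j|; since every unordered edge
   {i,j} (i <> j) is counted twice as an ordered pair, we multiply by 1/2. *)
Definition edge_norm {R : realFieldType} {V : finType} (e : rel V)
  (W : V -> V -> R) (S : V -> V -> bool) (x : V -> R) : R :=
  2^-1 * \sum_(i : V) \sum_(j : V | e i j && S i j) W i j * `|x i - x j|.

Definition tv_norm {R : realFieldType} {V : finType} (e : rel V)
  (W : V -> V -> R) (x : V -> R) : R := edge_norm e W (fun _ _ => true) x.

Definition boundary {V : finType} (P : {set {set V}}) : V -> V -> bool :=
  fun i j => pblock P i != pblock P j.

Definition interior {V : finType} (P : {set {set V}}) : V -> V -> bool :=
  fun i j => pblock P i == pblock P j.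

Definition indic {R : realFieldType} {V : finType} (C : {set V}) : V -> R :=
  fun i => if i \in C then 1 else 0.

Definition pwconst {R : realFieldType} {V : finType} (P : {set {set V}})
  (a : {set V} -> R) : V -> R :=
  fun i => \sum_(C in P) a C * indic C i.

(* Write u = xhat - x for the recovery error and z for the piecewise-constant
   signal.  On interior edges z is constant, so there ||x|| = ||x - z||.
   Optimality of xhat against the feasible x, together with two triangle
   inequalities, gives ||u||_int <= 2 ||x - z||_int + ||u||_bd, and the null
   space property ||u||_int >= 2 ||u||_bd then yields ||u||_bd <= 2 ||x - z||_int
   and ||u||_int <= 4 ||x - z||_int, hence ||u||_TV <= 6 ||x - z||_TV. *)
From mathcomp Require Import all_boot all_order all_algebra.
From mathcomp Require Import ring lra.
Set Implicit Arguments. Unset Strict Implicit.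
Import Order.TTheory GRing.Theory Num.Theory.
Local Open Scope ring_scope.

Section EdgeNorm.
Variables (R : realFieldType) (V : finType) (e : rel V) (W : V -> V -> R).

Lemma eq_edge_norm (S : V -> V -> bool) (f g : V -> R) :
  (forall i j, S i j -> `|f i - f j| = `|g i - g j|) ->
  edge_norm e W S f = edge_norm e W S g.
Proof.
move=> fg; rewrite /edge_norm; congr (_ * _); apply: eq_bigr => i _.
by apply: eq_bigr => j /andP [_ Sij]; rewrite fg.
Qed.

Lemma edge_normN S (f : V -> R) :
  edge_norm e W S (fun i => - f i) = edge_norm e W S f.
Proof. by apply: eq_edge_norm => i j _; rewrite -opprD normrN. Qed.

Lemma edge_norm_subC S (f g : V -> R) :
  edge_norm e W S (fun i => f i - g i) = edge_norm e W S (fun i => g i - f i).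
Proof. by apply: eq_edge_norm => i j _; rewrite -normrN; congr `|_|; ring. Qed.

Lemma tv_norm_splitC S (f : V -> R) :
  tv_norm e W f = edge_norm e W S f + edge_norm e W (fun i j => ~~ S i j) f.
Proof.
rewrite /tv_norm /edge_norm -mulrDr -big_split; congr (_ * _).
apply: eq_bigr => i _; rewrite (bigID (S i)) /=.
by congr (_ + _); apply: eq_bigl => j; rewrite andbT.
Qed.

Hypothesis W_ge0 : forall i j, 0 <= W i j.

Lemma edge_norm_ge0 S (f : V -> R) : 0 <= edge_norm e W S f.
Proof.
rewrite /edge_norm mulr_ge0 ?invr_ge0 ?ler0n //.
by apply: sumr_ge0 => i _; apply: sumr_ge0 => j _; apply: mulr_ge0.
Qed.

Lemma edge_norm_le_add S (f g h : V -> R) : (forall i, h i = f i + g i) ->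
  edge_norm e W S h <= edge_norm e W S f + edge_norm e W S g.
Proof.
move=> hE; rewrite /edge_norm -mulrDr ler_wpM2l ?invr_ge0 ?ler0n //.
rewrite -big_split ler_sum //= => i _; rewrite -big_split ler_sum //= => j _.
rewrite -mulrDr ler_wpM2l // !hE.
have -> : f i + g i - (f j + g j) = (f i - f j) + (g i - g j) by ring.
exact: ler_normD.
Qed.

End EdgeNorm.

Section Partition.
Variables (R : realFieldType) (V : finType) (e : rel V) (W : V -> V -> R).
Variable P : {set {set V}}.
Hypothesis partP : partition P [set: V].

Lemma tv_norm_interior_boundary (f : V -> R) :
  tv_norm e W f = edge_norm e W (interior P) f + edge_norm e W (boundary P) f.
Proof. exact: tv_norm_splitC. Qed.

Lemma pwconst_interior (a : {set V} -> R) i j :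
  interior P i j -> pwconst P a i = pwconst P a j.
Proof.
case/and3P: partP => /eqP coverP trivP _ /eqP Pij.
have mem_block k C : C \in P -> (k \in C) = (pblock P k == C).
  move=> PC; apply/idP/eqP => [|<-]; first exact: def_pblock.
  by rewrite mem_pblock coverP inE.
rewrite /pwconst; apply: eq_bigr => C PC.
by rewrite /indic !mem_block // Pij.
Qed.

Lemma edge_norm_interior_sub_pwconst (a : {set V} -> R) (f : V -> R) :
  edge_norm e W (interior P) (fun i => f i - pwconst P a i)
  = edge_norm e W (interior P) f.
Proof.
apply: eq_edge_norm => i j /(pwconst_interior a) ->.
by congr `|_|; ring.
Qed.

End Partition.

Theorem lemma2 (R : realFieldType) (V : finType) (e : rel V)
  (W : V -> V -> R) (P : {set {set V}}) (M : {set V}) (x xhat : V -> R) :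
  symmetric e ->
  (forall i j, W i j = W j i) ->
  (forall i j, 0 <= W i j) ->
  partition P [set: V] ->
  (* null space property relative to the partition *)
  (forall u : V -> R, (forall i, i \in M -> u i = 0) ->
     edge_norm e W (interior P) u >= 2 * edge_norm e W (boundary P) u) ->
  (* xhat solves the TV minimization with constraints on M *)
  (forall i, i \in M -> xhat i = x i) ->
  (forall xt : V -> R, (forall i, i \in M -> xt i = x i) ->
     tv_norm e W xhat <= tv_norm e W xt) ->
  (* bound against the min over piecewise-constant approximations *)
  forall a : {set V} -> R,
    tv_norm e W (fun i => x i - xhat i)
      <= 6 * tv_norm e W (fun i => x i - pwconst P a i).
Proof.
move=> _ _ W_ge0 partP nsp xhat_M /(_ x (fun _ _ => erefl)) xhat_le_x a.
set u := fun i => xhat i - x i.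
have int_u : edge_norm e W (interior P) u
    <= edge_norm e W (interior P) xhat + edge_norm e W (interior P) x.
  by rewrite -(edge_normN e W _ x) edge_norm_le_add.
have bd_x : edge_norm e W (boundary P) x
    <= edge_norm e W (boundary P) xhat + edge_norm e W (boundary P) u.
  rewrite /u -edge_norm_subC edge_norm_le_add // => i; ring.
have nsp_u : 2 * edge_norm e W (boundary P) u <= edge_norm e W (interior P) u.
  by apply: nsp => i Mi; rewrite /u xhat_M // subrr.
have tv_u : tv_norm e W (fun i => x i - xhat i) = tv_norm e W u.
  exact: edge_norm_subC.
have bd_v_ge0 := edge_norm_ge0 e W_ge0 (boundary P) (fun i => x i - pwconst P a i).
move: xhat_le_x bd_v_ge0; rewrite tv_u !(tv_norm_interior_boundary e W P).
rewrite edge_norm_interior_sub_pwconst //; lra.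
Qed.
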